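(* For every nonnegative integer $n$, the number of partitions $\lambda$ of $n$ with $\ell(\lambda)+\mu_2(\lambda)$ even minus the number of partitions $\lambda$ of $n$ with $\ell(\lambda)+\mu_2(\lambda)$ odd equals the number of partitions of $n$ into distinct odd parts.
   Context: For a partition $\lambda$, $\ell(\lambda)$ is its number of parts, and $\mu_2(\lambda)$ (the $2$-measure) is the length of the longest subsequence of the parts of $\lambda$ (listed in weakly decreasing order) in which the difference between any two consecutive members of the subsequence is at least $2$. *)

From mathcomp Require Import all_boot.
Set Implicit Arguments. Unset Strict Implicit. Unset Printing Implicit Defensive.

Definition is_partition (n : nat) (s : seq nat) : bool :=
  [&& sorted geq s, all (fun x => 0 < x) s & sumn s == n].

Fixpoint all_seqs (k m : nat) : seq (seq nat) :=
  match k with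
  | 0 => [:: [::]]
  | k'.+1 => [::] :: [seq x :: t | x <- iota 1 m, t <- all_seqs k' m]
  end.

(* Every partition of n has at most n parts, each at most n, so this lists
   all partitions of n, each exactly once. *)
Definition partitions (n : nat) : seq (seq nat) :=
  [seq s <- all_seqs n n | is_partition n s].

Definition ell (s : seq nat) : nat := size s.

Fixpoint all_masks (k : nat) : seq bitseq :=
  match k with
  | 0 => [:: [::]]
  | k'.+1 => [seq b :: m | b <- [:: false; true], m <- all_masks k']
  end.

Definition mu2 (s : seq nat) : nat :=
  \max_(t <- [seq mask m s | m <- all_masks (size s)]
         | sorted (fun a b => b + 2 <= a) t) size t.

Definition distinct_odd_partition (n : nat) (s : seq nat) : bool :=
  [&& is_partition n s, uniq s & all odd s].

(* Refine the signed count by the 2-measure m and a lower bound H on the parts.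
   Removing the smallest part shows that the generating function S(m,H) of the
   partitions with parts >= H and 2-measure m, counted with sign
   (-1)^(l + mu2), satisfies
     S(m+1,H) = S(m+1,H+1) + q^H / ((1 + q^H)(1 + q^(H+1))) S(m,H+2),
   whose unique solution is q^(mH + m(m-1)) / ((q;q)_m (-q^H;q)_m).  Partitions
   into m distinct odd parts >= H obey the same recurrence with [H odd] q^H as
   coefficient, with solution q^(m(H + [H even]) + m(m-1)) / (q^2;q^2)_m.  For
   H = 1 both solutions are q^(m^2) / (q^2;q^2)_m, and summing over m gives the
   theorem. *)

From HB Require Import structures.
From mathcomp Require Import all_boot all_algebra.
From mathcomp Require boolp.
From mathcomp Require Import zify ring.
Set Implicit Arguments. Unset Strict Implicit. Unset Printing Implicit Defensive.
Import GRing.Theory.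

Lemma mem_all_seqs k m s :
  (s \in all_seqs k m) = (size s <= k) && all (fun x => 0 < x <= m) s.
Proof.
elim: k s => [|k IHk] [|x s] //=; rewrite in_cons /= ltnS.
apply/allpairsP/idP => [[[y t]] /= [y_in t_in [-> ->]]|/and3P [s_size x_in s_in]].
  by move: y_in t_in; rewrite mem_iota IHk => y_in /andP [-> ->]; rewrite andbT; lia.
by exists (x, s); rewrite /= mem_iota IHk s_size s_in; split => //; lia.
Qed.

Lemma uniq_all_seqs k m : uniq (all_seqs k m).
Proof.
elim: k => [|k IHk] //=; apply/andP; split; first by apply/allpairsP => -[[y t] /= [_ _]].
by apply: allpairs_uniq => //; [exact: iota_uniq | move=> [a b] [c d] _ _ [-> ->]].
Qed.

Lemma partition_sorted n s : is_partition n s -> sorted geq s.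
Proof. by case/and3P. Qed.

Lemma partition_sumn n s : is_partition n s -> sumn s = n.
Proof. by case/and3P => _ _ /eqP. Qed.

Lemma mem_leq_sumn (s : seq nat) x : x \in s -> x <= sumn s.
Proof.
elim: s => //= y s IHs; rewrite in_cons => /predU1P [->|/IHs]; first exact: leq_addr.
by move/leq_trans; apply; apply: leq_addl.
Qed.

Lemma size_partition n s : is_partition n s -> size s <= n.
Proof.
case/and3P => _ s_pos /eqP <-.
by elim: s s_pos => //= x s IHs /andP [x_gt0 /IHs]; lia.
Qed.

Lemma mem_partitions n s : (s \in partitions n) = is_partition n s.
Proof.
rewrite mem_filter andb_idr // => s_part; rewrite mem_all_seqs size_partition //.
apply/allP => x x_in; move/and3P: s_part => [_ /allP/(_ x x_in) -> /eqP <-].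
exact: mem_leq_sumn.
Qed.

Lemma uniq_partitions n : uniq (partitions n).
Proof. exact/filter_uniq/uniq_all_seqs. Qed.

Lemma sorted_geq_rcons (s : seq nat) x :
  sorted geq (rcons s x) = sorted geq s && all (leq x) s.
Proof.
have geq_trans : transitive geq by move=> a b c /=; lia.
rewrite !(sorted_pairwise geq_trans) -cats1 pairwise_cat /= andbT andbC.
by congr (_ && _); apply: eq_all => y /=; rewrite andbT.
Qed.

Lemma sorted_min_rcons (t : seq nat) x :
  sorted geq t -> all (leq x) t -> x \in t -> exists s, t = rcons s x.
Proof.
case/lastP: t => // s y; rewrite sorted_geq_rcons all_rcons mem_rcons in_cons.
case/andP => _ s_ge_y /andP [le_xy _] /predU1P [->|x_in]; first by exists s.
by move/allP: s_ge_y => /(_ x x_in) le_yx; exists s; congr rcons; lia.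
Qed.

Lemma all_leqSE (s : seq nat) x : all (leq x.+1) s = all (leq x) s && (x \notin s).
Proof.
elim: s => //= y s ->; rewrite in_cons negb_or.
by case: (ltngtP x y); rewrite ?andbF.
Qed.

Lemma is_partition_rcons n (s : seq nat) x : 0 < x -> x <= n -> all (leq x) s ->
  is_partition n (rcons s x) = is_partition (n - x) s.
Proof.
move=> x_gt0 le_xn s_ge; rewrite /is_partition sorted_geq_rcons all_rcons sumn_rcons.
have -> : all (fun y => 0 < y) s by apply/allP => y /(allP s_ge); lia.
by rewrite s_ge x_gt0 /=; congr (_ && _); apply/eqP/eqP; lia.
Qed.

(** * The 2-measure *)

Lemma mem_all_masks k m : (m \in all_masks k) = (size m == k).
Proof.
elim: k m => [|k IHk] [|b m] //; rewrite [all_masks _]/= cats0 mem_cat.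
  by apply/negP => /orP [] /mapP [].
have cons_inj (c : bool) : injective (cons c) by move=> u v [].
by case: b; rewrite (mem_map (cons_inj _)) /= eqSS -IHk;
  [rewrite orb_idl // => /mapP [] | rewrite orb_idr // => /mapP []].
Qed.

Lemma mem_masks (s t : seq nat) :
  (t \in [seq mask m s | m <- all_masks (size s)]) = subseq t s.
Proof.
apply/mapP/subseqP => -[m m_size ->]; exists m => //.
  by apply/eqP; rewrite -mem_all_masks.
by rewrite mem_all_masks m_size.
Qed.

Lemma bigmax_seq_attained (I : eqType) (r : seq I) (P : pred I) (F : I -> nat) i0 :
  i0 \in r -> P i0 -> exists2 i, (i \in r) && P i & F i = \max_(j <- r | P j) F j.
Proof.
move=> r_i0 P_i0; set M := \max_(j <- r | P j) F j.
have [/hasP [i r_i /andP [P_i /eqP FiM]]|] := boolP (has (fun i => P i && (F i == M)) r).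
  by exists i; rewrite ?r_i ?P_i.
move/hasPn => not_max; suff M_le : M <= M.-1.
  have M0 : M = 0 by lia.
  exists i0; rewrite ?r_i0 ?P_i0 // M0; apply/eqP; rewrite -leqn0 -M0.
  exact: (leq_bigmax_seq (F := F) i0).
apply/bigmax_leqP_seq => i r_i P_i.
have := not_max i r_i; rewrite P_i /= => /eqP FiM.
have := leq_bigmax_seq (F := F) i r_i P_i; lia.
Qed.

Definition sep2 (a b : nat) := b + 2 <= a.

Lemma sep2_trans : transitive sep2.
Proof. by rewrite /sep2 => b a c; lia. Qed.

Lemma mu2_max (s t : seq nat) : subseq t s -> sorted sep2 t -> size t <= mu2 s.
Proof. by move=> t_sub t_sep; apply: (leq_bigmax_seq t); rewrite ?mem_masks. Qed.

Lemma mu2_leq (s : seq nat) k :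
  (forall t, subseq t s -> sorted sep2 t -> size t <= k) -> mu2 s <= k.
Proof. by move=> max_k; apply/bigmax_leqP_seq => t; rewrite mem_masks; apply: max_k. Qed.

Lemma mu2_attained (s : seq nat) :
  exists2 t, subseq t s & sorted sep2 t /\ size t = mu2 s.
Proof.
have nil_in : [::] \in [seq mask m s | m <- all_masks (size s)].
  by rewrite mem_masks sub0seq.
have [t /andP [t_in t_sep] t_max] :=
  bigmax_seq_attained (P := sorted sep2) size nil_in (erefl true).
by exists t; rewrite -?mem_masks.
Qed.

Lemma mu2_size (s : seq nat) : mu2 s <= size s.
Proof. by apply: mu2_leq => t t_sub _; apply: size_subseq. Qed.

Lemma mu2_nil : mu2 [::] = 0.
Proof. by apply/eqP; rewrite -leqn0; apply: (mu2_size [::]). Qed.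

Lemma mu2_gt0 (s : seq nat) : s != [::] -> 0 < mu2 s.
Proof.
by case: s => // x s _; apply: (@mu2_max _ [:: x]); rewrite ?sub1seq ?mem_head.
Qed.

Lemma count_sep2_small (t : seq nat) x :
  sorted sep2 t -> all (leq x) t -> count (fun y => y < x.+2) t <= 1.
Proof.
rewrite (sorted_pairwise sep2_trans).
elim: t => //= a t IHt /andP [a_sep t_sep] /andP [le_xa t_ge].
have [lt_a|_] := ltnP a x.+2; last by rewrite add0n IHt.
rewrite (eqP (_ : count _ t == 0)) // -leqn0 leqNgt -has_count.
apply/hasPn => y t_y; move/allP: a_sep => /(_ y t_y).
by move/allP: t_ge => /(_ y t_y); rewrite /sep2; lia.
Qed.

Lemma sorted_sep2_rcons (t : seq nat) x :
  sorted sep2 t -> all (leq x.+2) t -> sorted sep2 (rcons t x).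
Proof.
move=> t_sep t_ge; rewrite (sorted_pairwise sep2_trans) -cats1 pairwise_cat /=.
rewrite -(sorted_pairwise sep2_trans) t_sep !andbT.
by apply/allP => y /(allP t_ge); rewrite /= andbT /sep2; lia.
Qed.

(* The 2-measure is computed greedily from the smallest part upwards. *)
Lemma mu2_rcons_min (l : seq nat) x : all (leq x) l ->
  mu2 (rcons l x) = (mu2 [seq y <- l | x.+2 <= y]).+1.
Proof.
move=> l_ge; apply/eqP; rewrite eqn_leq; apply/andP; split.
  apply: mu2_leq => t t_sub t_sep.
  have t_ge : all (leq x) t.
    apply/allP => y /(mem_subseq t_sub); rewrite mem_rcons in_cons.
    by case/predU1P => [->|/(allP l_ge)].
  have sub_big : subseq [seq y <- t | x.+2 <= y] [seq y <- l | x.+2 <= y].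
    have -> : [seq y <- l | x.+2 <= y] = [seq y <- rcons l x | x.+2 <= y].
      by rewrite filter_rcons ifN //; lia.
    by rewrite subseq_filter filter_all (subseq_trans (filter_subseq _ _) t_sub).
  have := mu2_max sub_big (sorted_filter sep2_trans _ t_sep).
  have := count_sep2_small t_sep t_ge.
  rewrite -(count_predC (fun y => x.+2 <= y) t) size_filter.
  have -> : count (predC (fun y => x.+2 <= y)) t = count (fun y => y < x.+2) t.
    by apply: eq_count => y; rewrite /= -ltnNge.
  lia.
have [t t_sub [t_sep <-]] := mu2_attained [seq y <- l | x.+2 <= y].
rewrite -(size_rcons t x); apply: mu2_max.
  by rewrite -!cats1 subseq_cat2r (subseq_trans t_sub (filter_subseq _ _)).
apply: sorted_sep2_rcons t_sep _; apply/allP => y /(mem_subseq t_sub).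
by rewrite mem_filter => /andP [].
Qed.

Lemma mu2_rcons_gap (s : seq nat) x : all (leq x.+2) s -> mu2 (rcons s x) = (mu2 s).+1.
Proof.
move=> s_ge; rewrite mu2_rcons_min; first by move/all_filterP: s_ge => ->.
by apply/allP => y /(allP s_ge); lia.
Qed.

Lemma mu2_rcons_succ (s : seq nat) x : all (leq x.+1) s ->
  mu2 (rcons (rcons s x.+1) x) = mu2 (rcons s x).
Proof.
have ge_x : all (leq x.+1) s -> all (leq x) s.
  by move/allP => s_ge; apply/allP => y /s_ge; lia.
move=> s_ge; rewrite !mu2_rcons_min ?all_rcons ?leqnSn ?ge_x //.
by rewrite filter_rcons ltnn.
Qed.

Lemma mu2_rcons_dup (s : seq nat) x :
  sorted geq s -> all (leq x) s -> x \in s -> mu2 (rcons s x) = mu2 s.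
Proof.
move=> s_sorted s_ge x_in; have [s' s_def] := sorted_min_rcons s_sorted s_ge x_in.
move: s_ge; rewrite s_def all_rcons => /andP [_ s'_ge].
rewrite !mu2_rcons_min ?all_rcons ?leqnn ?s'_ge //.
by rewrite filter_rcons ifN //; lia.
Qed.

Local Open Scope ring_scope.

Section SumsOverPartitions.
Variable R : nmodType.
Implicit Types (P : pred (seq nat)) (F : seq nat -> R).

Lemma eq_big_partitions n P1 P2 F1 F2 :
    (forall s, is_partition n s -> P1 s = P2 s) ->
    (forall s, is_partition n s -> P1 s -> F1 s = F2 s) ->
  \sum_(s <- partitions n | P1 s) F1 s = \sum_(s <- partitions n | P2 s) F2 s.
Proof.
move=> eqP12 eqF12; rewrite big_seq_cond [RHS]big_seq_cond.
apply: eq_big => [s|s /andP [s_in P1s]]; last by apply: eqF12; rewrite -?mem_partitions.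
by rewrite mem_partitions; case s_part: (is_partition n s); rewrite //= eqP12.
Qed.

Lemma big_partitions_min n x P F : (0 < x)%N -> (x <= n)%N ->
  \sum_(s <- partitions n | [&& all (leq x) s, x \in s & P s]) F s =
  \sum_(s <- partitions (n - x) | all (leq x) s && P (rcons s x)) F (rcons s x).
Proof.
move=> x_gt0 le_xn; rewrite -big_filter -[RHS]big_filter -(big_map (rcons^~ x) xpredT F).
apply/perm_big/uniq_perm; first exact/filter_uniq/uniq_partitions.
  by rewrite map_inj_uniq; [exact/filter_uniq/uniq_partitions | exact: rcons_injl].
move=> t; rewrite mem_filter mem_partitions; apply/idP/mapP.
  case/andP => /and3P [t_ge x_in Pt] t_part.
  have [s t_def] := sorted_min_rcons (partition_sorted t_part) t_ge x_in.
  move: t_ge t_part Pt; rewrite t_def all_rcons => /andP [_ s_ge].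
  rewrite is_partition_rcons // => s_part Ps.
  by exists s; rewrite // mem_filter mem_partitions s_ge s_part Ps.
case=> s; rewrite mem_filter mem_partitions => /andP [/andP [s_ge Ps] s_part] ->.
by rewrite /= all_rcons leqnn s_ge mem_rcons mem_head Ps is_partition_rcons.
Qed.

End SumsOverPartitions.

Lemma big_fibers (R : nmodType) (I : eqType) (r : seq I) (P : pred I) (f : I -> nat)
    (F : I -> R) N :
    (forall i, i \in r -> P i -> (f i < N)%N) ->
  \sum_(i <- r | P i) F i = \sum_(m < N) \sum_(i <- r | P i && (f i == m)) F i.
Proof.
move=> f_lt; rewrite -(exchange_big_dep xpredT) //= big_seq_cond [RHS]big_seq_cond.
apply: eq_bigr => i /andP [r_i P_i].
by rewrite (big_pred1 (Ordinal (f_lt i r_i P_i))) // => m; rewrite eq_sym.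
Qed.
Arguments big_fibers {R I r P} f {F} N.

(** * Formal power series *)

Section FormalPowerSeries.
Variable R : comNzRingType.

Record fps := FPS { fcoef : nat -> R }.
HB.instance Definition _ := boolp.gen_eqMixin fps.
HB.instance Definition _ := boolp.gen_choiceMixin fps.

Lemma fpsP (f g : fps) : (forall n, fcoef f n = fcoef g n) -> f = g.
Proof. by case: f; case: g => g f /= eq_fg; congr FPS; apply: boolp.funext. Qed.

Definition fps_add f g := FPS (fun n => fcoef f n + fcoef g n).
Definition fps_opp f := FPS (fun n => - fcoef f n).

Lemma fps_addA : associative fps_add.
Proof. by move=> f g h; apply: fpsP => n /=; rewrite addrA. Qed.
Lemma fps_addC : commutative fps_add.
Proof. by move=> f g; apply: fpsP => n /=; rewrite addrC. Qed.
Lemma fps_add0 : left_id (FPS (fun=> 0)) fps_add.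
Proof. by move=> f; apply: fpsP => n /=; rewrite add0r. Qed.
Lemma fps_addN : left_inverse (FPS (fun=> 0)) fps_opp fps_add.
Proof. by move=> f; apply: fpsP => n /=; rewrite addNr. Qed.

HB.instance Definition _ :=
  GRing.isZmodule.Build fps fps_addA fps_addC fps_add0 fps_addN.

(* The n-th coefficient of a product only involves coefficients up to n, so
   products are computed on truncations and inherit associativity from
   polynomial multiplication. *)
Definition fps_trunc n f : {poly R} := \poly_(i < n.+1) fcoef f i.

Definition fps_mul f g := FPS (fun n => (fps_trunc n f * fps_trunc n g)`_n).

Lemma coef_fps_trunc n f i : (i <= n)%N -> (fps_trunc n f)`_i = fcoef f i.
Proof. by move=> le_in; rewrite coef_poly ltnS le_in. Qed.

Lemma coefM_trunc (p p' r r' : {poly R}) n :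
    (forall i, (i <= n)%N -> p`_i = p'`_i) ->
    (forall i, (i <= n)%N -> r`_i = r'`_i) ->
  (p * r)`_n = (p' * r')`_n.
Proof.
move=> eq_p eq_r; rewrite !coefM; apply: eq_bigr => -[i lt_in] _ /=.
by rewrite eq_p ?eq_r ?leq_subr // -ltnS.
Qed.

Lemma fcoef_mul f g n :
  fcoef (fps_mul f g) n = \sum_(i < n.+1) fcoef f i * fcoef g (n - i).
Proof.
rewrite /= coefM; apply: eq_bigr => -[i lt_in] _ /=.
by rewrite !coef_fps_trunc ?leq_subr // -ltnS.
Qed.

Lemma fcoef_mul_trunc f g n m : (m <= n)%N ->
  fcoef (fps_mul f g) m = (fps_trunc n f * fps_trunc n g)`_m.
Proof.
by move=> le_mn; apply: coefM_trunc => i le_im; rewrite !coef_fps_trunc //;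
  apply: leq_trans le_mn.
Qed.

Lemma fps_mulA : associative fps_mul.
Proof.
move=> f g h; apply: fpsP => n /=.
have truncM u v i : (i <= n)%N ->
    (fps_trunc n (fps_mul u v))`_i = (fps_trunc n u * fps_trunc n v)`_i.
  by move=> le_in; rewrite coef_fps_trunc // (fcoef_mul_trunc _ _ le_in).
rewrite (coefM_trunc (fun i _ => erefl) (truncM g h)).
by rewrite (coefM_trunc (truncM f g) (fun i _ => erefl)) mulrA.
Qed.

Lemma fps_mulC : commutative fps_mul.
Proof. by move=> f g; apply: fpsP => n /=; rewrite mulrC. Qed.

Lemma fps_mul1 : left_id (FPS (fun n => (n == 0)%:R)) fps_mul.
Proof.
move=> f; apply: fpsP => n; rewrite fcoef_mul big_ord_recl /= mul1r subn0.
by rewrite big1 ?addr0 // => i _; rewrite mul0r.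
Qed.

Lemma fps_mulDl : left_distributive fps_mul fps_add.
Proof.
move=> f g h; apply: fpsP => n.
transitivity (fcoef (fps_mul f h) n + fcoef (fps_mul g h) n); last by [].
rewrite !fcoef_mul -big_split /=.
by apply: eq_bigr => i _; rewrite mulrDl.
Qed.

HB.instance Definition _ :=
  GRing.Zmodule_isComPzRing.Build fps fps_mulA fps_mulC fps_mul1 fps_mulDl.

Lemma fcoefD (f g : fps) n : fcoef (f + g) n = fcoef f n + fcoef g n.
Proof. by []. Qed.
Lemma fcoefB (f g : fps) n : fcoef (f - g) n = fcoef f n - fcoef g n.
Proof. by []. Qed.
Lemma fcoefM (f g : fps) n :
  fcoef (f * g) n = \sum_(i < n.+1) fcoef f i * fcoef g (n - i).
Proof. exact: fcoef_mul. Qed.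

Definition fpsX := FPS (fun n => (n == 1)%:R).
Local Notation q := fpsX.

Lemma fcoef_XM g n : fcoef (q * g) n = if n is n'.+1 then fcoef g n' else 0.
Proof.
rewrite fcoefM; case: n => [|n]; first by rewrite big_ord_recl big_ord0 /= mul0r addr0.
rewrite big_ord_recl /= mul0r add0r big_ord_recl /= mul1r subSS subn0.
by rewrite big1 ?addr0 // => i _; rewrite mul0r.
Qed.

Lemma fcoef_XnM k g n :
  fcoef (q ^+ k * g) n = if (k <= n)%N then fcoef g (n - k) else 0.
Proof.
elim: k n => [|k IHk] n; first by rewrite expr0 mul1r subn0.
by rewrite exprS -mulrA fcoef_XM; case: n.
Qed.

Definition geom k := FPS (fun n => (k %| n)%N%:R).
Definition altgeom k :=
  FPS (fun n => if (k %| n)%N then (-1) ^+ (n %/ k)%N else 0).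

Lemma mul_geom k : (0 < k)%N -> (1 - q ^+ k) * geom k = 1.
Proof.
move=> k_gt0; apply: fpsP => n; rewrite mulrBl mul1r fcoefB fcoef_XnM /=.
case: n => [|n]; first by rewrite dvdn0 leqNgt k_gt0 subr0.
have [le_kn|lt_nk] := leqP k n.+1; first by rewrite dvdn_subl // subrr.
by rewrite subr0 gtnNdvd.
Qed.

Lemma mul_altgeom k : (0 < k)%N -> (1 + q ^+ k) * altgeom k = 1.
Proof.
move=> k_gt0; apply: fpsP => n; rewrite mulrDl mul1r fcoefD fcoef_XnM /=.
case: n => [|n]; first by rewrite dvdn0 div0n leqNgt k_gt0 addr0.
have [le_kn|lt_nk] := leqP k n.+1; last by rewrite addr0 gtnNdvd.
rewrite dvdn_subl //; case: ifP => [dvd_kn|_]; last by rewrite addr0.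
rewrite divnBr // divnn k_gt0.
have : (0 < n.+1 %/ k)%N by rewrite divn_gt0.
by case: (n.+1 %/ k)%N => [|j] // _; rewrite subSS subn0 exprS mulN1r addNr.
Qed.

Lemma fcoef_1DXnM k (f : fps) n :
  fcoef ((1 + q ^+ k) * f) n = fcoef f n + (if (k <= n)%N then fcoef f (n - k) else 0).
Proof. by rewrite mulrDl mul1r fcoefD fcoef_XnM. Qed.

Lemma altgeom_solve k (f g : fps) :
  (0 < k)%N -> (1 + q ^+ k) * f = g -> f = altgeom k * g.
Proof. by move=> k_gt0 <-; rewrite mulrA [altgeom k * _]mulrC mul_altgeom ?mul1r. Qed.

Lemma geom_altgeom k : (0 < k)%N -> geom k * altgeom k = geom (2 * k).
Proof.
move=> k_gt0; have k2_gt0 : (0 < 2 * k)%N by rewrite muln_gt0.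
have factor : 1 - q ^+ (2 * k) = (1 - q ^+ k) * (1 + q ^+ k).
  by rewrite mulnC exprM; ring.
rewrite -[LHS]mul1r -(mul_geom k2_gt0) factor.
transitivity ((1 - q ^+ k) * geom k * ((1 + q ^+ k) * altgeom k) * geom (2 * k)).
  by ring.
by rewrite mul_geom // mul_altgeom // !mul1r.
Qed.

(* The q^n-coefficient of c (m+1) H is determined by that of c (m+1) (H+1)
   and by lower coefficients of c m (H+2), and it vanishes once H > n. *)
Lemma fps_rec_unique (c d : nat -> nat -> fps) (r : nat -> fps) :
    (forall H, (0 < H)%N -> c 0%N H = d 0%N H) ->
    (forall m H n, (n < H)%N -> fcoef (c m.+1 H) n = 0) ->
    (forall m H n, (n < H)%N -> fcoef (d m.+1 H) n = 0) ->
    (forall m H, (0 < H)%N -> c m.+1 H = c m.+1 H.+1 + q ^+ H * r H * c m H.+2) ->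
    (forall m H, (0 < H)%N -> d m.+1 H = d m.+1 H.+1 + q ^+ H * r H * d m H.+2) ->
  forall m H, (0 < H)%N -> c m H = d m H.
Proof.
move=> eq0 c_small d_small c_rec d_rec.
suff coefE n m H : (0 < H)%N -> fcoef (c m H) n = fcoef (d m H) n.
  by move=> m H H_gt0; apply: fpsP => n; apply: coefE.
elim/ltn_ind: n m H => n IHn [|m] H H_gt0; first by rewrite eq0.
have [k] := ubnP (n.+1 - H); elim: k H H_gt0 => // k IHk H H_gt0 ltk.
have [lt_nH|le_Hn] := ltnP n H; first by rewrite c_small ?d_small.
rewrite c_rec // d_rec // !fcoefD (IHk H.+1) //; last by lia.
congr (_ + _); rewrite -!mulrA !fcoef_XnM le_Hn !fcoefM.
by apply: eq_bigr => i _; rewrite IHn //; lia.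
Qed.

Definition prod_geom m := \prod_(1 <= j < m.+1) geom j.
Definition prod_geom2 m := \prod_(1 <= j < m.+1) geom (2 * j).
Definition prod_altgeom a k := \prod_(0 <= j < k) altgeom (a + j).

(* q^(H + (H+2) + ... + (H+2m-2)) is the weight of the smallest partition with
   parts at least H and 2-measure m. *)
Definition gf_mu2 m H :=
  q ^+ (m * H + m * (m - 1)) * (prod_geom m * prod_altgeom H m).

Definition gf_distinct_odd m H :=
  q ^+ (m * (H + ~~ odd H) + m * (m - 1)) * prod_geom2 m.

Lemma gf_mu2_0 H : gf_mu2 0 H = 1.
Proof. by rewrite /gf_mu2 /prod_geom /prod_altgeom !big_geq // mulr1 expr0 mul1r. Qed.

Lemma gf_distinct_odd_0 H : gf_distinct_odd 0 H = 1.
Proof. by rewrite /gf_distinct_odd /prod_geom2 big_geq // mulr1 expr0. Qed.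

Lemma prod_geomS m : prod_geom m.+1 = prod_geom m * geom m.+1.
Proof. by rewrite /prod_geom big_nat_recr. Qed.

Lemma prod_geom2S m : prod_geom2 m.+1 = prod_geom2 m * geom (2 * m.+1).
Proof. by rewrite /prod_geom2 big_nat_recr. Qed.

Lemma prod_altgeomSl a k : prod_altgeom a k.+1 = altgeom a * prod_altgeom a.+1 k.
Proof.
rewrite /prod_altgeom big_nat_recl // addn0; congr (_ * _).
by apply: eq_bigr => j _; rewrite addSnnS.
Qed.

Lemma prod_altgeomSr a k : prod_altgeom a k.+1 = prod_altgeom a k * altgeom (a + k).
Proof. by rewrite /prod_altgeom big_nat_recr. Qed.

Lemma gf_mu2_small m H n : (n < H)%N -> fcoef (gf_mu2 m.+1 H) n = 0.
Proof. by move=> lt_nH; rewrite fcoef_XnM ifN // -ltnNge; nia. Qed.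

Lemma gf_distinct_odd_small m H n :
  (n < H)%N -> fcoef (gf_distinct_odd m.+1 H) n = 0.
Proof. by move=> lt_nH; rewrite fcoef_XnM ifN // -ltnNge; nia. Qed.

Lemma gf_mu2_rec m H : (0 < H)%N ->
  gf_mu2 m.+1 H = gf_mu2 m.+1 H.+1 + q ^+ H * (altgeom H * altgeom H.+1) * gf_mu2 m H.+2.
Proof.
move=> H_gt0; rewrite /gf_mu2 prod_geomS (prod_altgeomSl H) (prod_altgeomSr H.+1).
have -> : (m.+1 * H.+1 + m.+1 * (m.+1 - 1) = H + (m * H.+2 + m * (m - 1)) + m.+1)%N.
  by case: m => [|m]; rewrite ?muln0 ?subn0 /=; nia.
have -> : (m.+1 * H + m.+1 * (m.+1 - 1) = H + (m * H.+2 + m * (m - 1)))%N.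
  by case: m => [|m]; rewrite ?muln0 ?subn0 /=; nia.
have shiftA : altgeom H.+1 * prod_altgeom H.+2 m
            = prod_altgeom H.+1 m * altgeom (H.+1 + m).
  by rewrite -prod_altgeomSl prod_altgeomSr.
rewrite (exprD q (H + _) m.+1) !(exprD q H).
set x := q ^+ H; set y := q ^+ m.+1; set Q := q ^+ (m * H.+2 + _).
set G := prod_geom m; set g := geom m.+1; set a := altgeom H.
set c := altgeom H.+1; set b := altgeom (H.+1 + m).
have hg : (1 - y) * g = 1 by rewrite mul_geom.
have ha : (1 + x) * a = 1 by rewrite mul_altgeom.
have hb : (1 + x * y) * b = 1 by rewrite /x /y -exprD addnS -addSn mul_altgeom.
have key : g * a - y * (g * b) - a * b = 0.
  transitivity (g * a * ((1 + x * y) * b) - y * (g * b * ((1 + x) * a))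
                - a * b * ((1 - y) * g)); first by rewrite hb ha hg !mulr1.
  by ring.
have -> : x * (a * c) * (Q * (G * prod_altgeom H.+2 m))
          = x * a * Q * G * (c * prod_altgeom H.+2 m) by ring.
rewrite shiftA -/b; apply/eqP; rewrite -subr_eq0; apply/eqP.
transitivity (x * Q * G * prod_altgeom H.+1 m * (g * a - y * (g * b) - a * b)).
  by ring.
by rewrite key mulr0.
Qed.

Lemma gf_distinct_odd_rec m H :
  gf_distinct_odd m.+1 H =
    gf_distinct_odd m.+1 H.+1 + q ^+ H * (odd H)%:R * gf_distinct_odd m H.+2.
Proof.
rewrite /gf_distinct_odd /=; case: (boolP (odd H)) => odd_H /=.
  have -> : (m.+1 * (H.+1 + true) + m.+1 * (m.+1 - 1)
             = H + (m * (H.+2 + false) + m * (m - 1)) + 2 * m.+1)%N.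
    by case: m => [|m]; rewrite ?muln0 ?subn0 /=; nia.
  have -> : (m.+1 * (H + false) + m.+1 * (m.+1 - 1)
             = H + (m * (H.+2 + false) + m * (m - 1)))%N.
    by case: m => [|m]; rewrite ?muln0 ?subn0 /=; nia.
  rewrite prod_geom2S (exprD q (H + _)) !(exprD q H).
  set x := q ^+ H; set y := q ^+ (2 * m.+1); set g := geom (2 * m.+1).
  have hg : (1 - y) * g = 1 by rewrite mul_geom.
  apply/eqP; rewrite -subr_eq0; apply/eqP.
  transitivity (x * q ^+ (m * (H.+2 + false) + m * (m - 1)) * prod_geom2 m
                * ((1 - y) * g - 1)); first by ring.
  by rewrite hg subrr mulr0.
rewrite mulr0 mul0r addr0; congr (q ^+ _ * _); lia.
Qed.

Lemma gf_mu2_distinct_odd m : gf_mu2 m 1 = gf_distinct_odd m 1.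
Proof.
rewrite /gf_mu2 /gf_distinct_odd /= addn0 muln1; congr (_ * _).
rewrite /prod_geom /prod_geom2 /prod_altgeom.
have -> : \prod_(0 <= j < m) altgeom (1 + j) = \prod_(1 <= j < m.+1) altgeom j.
  by rewrite big_add1 /=; apply: eq_bigr => j _; rewrite add1n.
rewrite -big_split /= !big_nat; apply: eq_bigr => j /andP [j_gt0 _].
exact: geom_altgeom.
Qed.

End FormalPowerSeries.

Arguments fpsX {R}.
Arguments altgeom {R}.
Arguments gf_mu2 {R}.
Arguments gf_distinct_odd {R}.
Local Notation q := fpsX.

(** * Signed counts *)

Definition sgn_mu2 (s : seq nat) : int := (-1) ^+ (size s + mu2 s).

Definition signed_mu2 m H n : int :=
  \sum_(s <- partitions n | all (leq H) s && (mu2 s == m)) sgn_mu2 s.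

Definition signed_mu2_min m H n : int :=
  \sum_(s <- partitions n | [&& all (leq H) s, H \in s & mu2 s == m]) sgn_mu2 s.

(* Partitions whose smallest part H occurs once, indexed by what remains after
   removing that part. *)
Definition signed_mu2_single m H n : int :=
  \sum_(s <- partitions n | all (leq H.+1) s && (mu2 (rcons s H) == m))
    sgn_mu2 (rcons s H).

Lemma sgn_mu2_rcons_dup (s : seq nat) x :
  sorted geq s -> all (leq x) s -> x \in s -> sgn_mu2 (rcons s x) = - sgn_mu2 s.
Proof. by move=> *; rewrite /sgn_mu2 size_rcons mu2_rcons_dup // addSn exprS mulN1r. Qed.

Lemma sgn_mu2_rcons_succ (s : seq nat) x : all (leq x.+1) s ->
  sgn_mu2 (rcons (rcons s x.+1) x) = - sgn_mu2 (rcons s x).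
Proof.
by move=> *; rewrite /sgn_mu2 !size_rcons mu2_rcons_succ // addSn exprS mulN1r.
Qed.

Lemma sgn_mu2_rcons_gap (s : seq nat) x :
  all (leq x.+2) s -> sgn_mu2 (rcons s x) = sgn_mu2 s.
Proof.
move=> *; rewrite /sgn_mu2 size_rcons mu2_rcons_gap //.
by rewrite addSn addnS !exprS !mulN1r opprK.
Qed.

Lemma signed_mu2_split m H n :
  signed_mu2 m H n = signed_mu2 m H.+1 n + signed_mu2_min m H n.
Proof.
rewrite /signed_mu2 /signed_mu2_min (bigID (fun s => H \in s)) /= addrC.
congr (_ + _); apply: eq_bigl => s; rewrite ?all_leqSE;
  by case: (all _ _) (H \in s) (mu2 s == m) => [] [] [].
Qed.

Lemma signed_mu2_min_small m H n : (n < H)%N -> signed_mu2_min m H n = 0.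
Proof.
move=> lt_nH; rewrite /signed_mu2_min big_seq_cond big1 // => s.
rewrite mem_partitions => /and4P [/partition_sumn s_sum _ /mem_leq_sumn + _].
by rewrite s_sum; lia.
Qed.

(* Removing one copy of H flips the sign, unless H occurs only once. *)
Lemma signed_mu2_min_rec m H n : (0 < H)%N -> (H <= n)%N ->
  signed_mu2_min m H n = - signed_mu2_min m H (n - H) + signed_mu2_single m H (n - H).
Proof.
move=> H_gt0 le_Hn; rewrite /signed_mu2_min big_partitions_min //.
rewrite (bigID (fun s => H \in s)) /= -sumrN; congr (_ + _).
  apply: eq_big_partitions => s /partition_sorted s_sorted.
    case s_ge: (all _ s); case: (boolP (H \in s)) => H_in; rewrite ?andbF //=.
    by rewrite andbT mu2_rcons_dup.
  by case/andP => /andP [s_ge _] H_in; rewrite sgn_mu2_rcons_dup.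
apply: eq_big_partitions => // s _; rewrite all_leqSE.
by case: (all _ _) (H \in s) (_ == m) => [] [] [].
Qed.

(* Removing one copy of H+1 flips the sign; without it the parts are >= H+2. *)
Lemma signed_mu2_single_rec m H n :
  signed_mu2_single m.+1 H n =
    - (if (H.+1 <= n)%N then signed_mu2_single m.+1 H (n - H.+1) else 0)
    + signed_mu2 m H.+2 n.
Proof.
rewrite /signed_mu2_single (bigID (fun s => H.+1 \in s)) /=.
congr (_ + _).
  have [le_Hn|lt_nH] := leqP H.+1 n; last first.
    rewrite big_seq_cond big1 ?oppr0 // => s.
    rewrite mem_partitions => /and3P [/partition_sumn s_sum _ /mem_leq_sumn].
    by rewrite s_sum; lia.
  rewrite -sumrN (eq_bigl (fun s =>
    [&& all (leq H.+1) s, H.+1 \in s & mu2 (rcons s H) == m.+1])); last first.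
    by move=> s /=; case: (all _ _) (H.+1 \in s) (_ == _) => [] [] [].
  rewrite (big_partitions_min _ (fun s => sgn_mu2 (rcons s H))) //.
  apply: eq_big_partitions => s _.
    by case s_ge: (all _ s); rewrite //= mu2_rcons_succ.
  by case/andP => s_ge _; rewrite sgn_mu2_rcons_succ.
apply: eq_big_partitions => s _.
  rewrite [in RHS]all_leqSE; case s_ge: (all _ s); rewrite ?andbF //=.
  case: (boolP (H.+1 \in s)) => H_in; rewrite ?andbF ?andbT //=.
  by rewrite mu2_rcons_gap ?eqSS // all_leqSE s_ge.
by case/andP => /andP [s_ge _] H_in; rewrite sgn_mu2_rcons_gap // all_leqSE s_ge.
Qed.

Lemma signed_mu2_0 H n : signed_mu2 0 H n = (n == 0)%:R.
Proof.
case: n => [|n].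
  by rewrite /signed_mu2 /partitions /= big_cons big_nil /= /sgn_mu2 mu2_nil addr0.
rewrite /signed_mu2 big_seq_cond big1 // => s; rewrite mem_partitions.
case: s => [|x s] /andP [s_part /andP [_ /eqP mu2_s]].
  by move: s_part; rewrite /is_partition.
by have := @mu2_gt0 (x :: s) isT; rewrite mu2_s ltnn.
Qed.

Lemma signed_mu2_small m H n : (n < H)%N -> signed_mu2 m.+1 H n = 0.
Proof.
move=> lt_nH; rewrite /signed_mu2 big_seq_cond big1 // => s; rewrite mem_partitions.
case: s => [|x s] /andP [/partition_sumn s_sum /andP [s_ge mu2_s]].
  by rewrite mu2_nil in mu2_s.
by move: s_ge s_sum => /= /andP [le_Hx _] s_sum; exfalso; lia.
Qed.

Lemma signed_mu2_gf_rec m H : (0 < H)%N ->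
  FPS (signed_mu2 m.+1 H) = FPS (signed_mu2 m.+1 H.+1)
    + q ^+ H * (altgeom H * altgeom H.+1) * FPS (signed_mu2 m H.+2).
Proof.
move=> H_gt0.
have single : FPS (signed_mu2_single m.+1 H) = altgeom H.+1 * FPS (signed_mu2 m H.+2).
  apply: altgeom_solve => //; apply: fpsP => n.
  rewrite fcoef_1DXnM /= signed_mu2_single_rec.
  by case: ifP => _; rewrite ?oppr0 ?add0r ?addr0 // addrAC addNr add0r.
have min : FPS (signed_mu2_min m.+1 H)
            = altgeom H * (q ^+ H * FPS (signed_mu2_single m.+1 H)).
  apply: altgeom_solve => //; apply: fpsP => n; rewrite fcoef_1DXnM fcoef_XnM /=.
  have [le_Hn|lt_nH] := leqP H n; last by rewrite signed_mu2_min_small ?addr0.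
  by rewrite signed_mu2_min_rec // addrAC addNr add0r.
transitivity (FPS (signed_mu2 m.+1 H.+1) + FPS (signed_mu2_min m.+1 H)).
  by apply: fpsP => n; rewrite fcoefD /= signed_mu2_split.
by rewrite min single; congr (_ + _); ring.
Qed.

Definition num_distinct_odd m H n : int :=
  \sum_(s <- partitions n | [&& all (leq H) s, uniq s, all odd s & size s == m]) 1.

Lemma num_distinct_odd_0 H n : num_distinct_odd 0 H n = (n == 0)%:R.
Proof.
case: n => [|n]; first by rewrite /num_distinct_odd /partitions /= big_cons big_nil addr0.
rewrite /num_distinct_odd big_seq_cond big1 // => s; rewrite mem_partitions.
by case: s => [|x s] /andP [s_part /and4P [_ _ _ //]].
Qed.

Lemma num_distinct_odd_small m H n : (n < H)%N -> num_distinct_odd m.+1 H n = 0.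
Proof.
move=> lt_nH; rewrite /num_distinct_odd big_seq_cond big1 // => s; rewrite mem_partitions.
case: s => [|x s] /andP [/partition_sumn s_sum /and4P [s_ge _ _ //]].
by move: s_ge s_sum => /= /andP [le_Hx _] s_sum; exfalso; lia.
Qed.

Lemma num_distinct_odd_rec m H n : (0 < H)%N ->
  num_distinct_odd m.+1 H n = num_distinct_odd m.+1 H.+1 n
    + (if odd H && (H <= n)%N then num_distinct_odd m H.+2 (n - H) else 0).
Proof.
move=> H_gt0; rewrite /num_distinct_odd (bigID (fun s => H \in s)) /= addrC.
congr (_ + _).
  apply: eq_bigl => s; rewrite all_leqSE.
  by case: (all _ _) (H \in s) (uniq s) (all odd s) (size s == m.+1) => [] [] [] [] [].
case: (boolP (odd H)) => odd_H /=; last first.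
  rewrite big_seq_cond big1 // => s /and3P [_ /and4P [_ _ s_odd _] H_in].
  by move/allP: s_odd => /(_ H H_in); rewrite (negbTE odd_H).
have [le_Hn|lt_nH] := leqP H n; last first.
  rewrite big_seq_cond big1 // => s /and3P [+ _ /mem_leq_sumn].
  by rewrite mem_partitions => /partition_sumn ->; lia.
rewrite (eq_bigl (fun s => [&& all (leq H) s, H \in s &
    [&& uniq s, all odd s & size s == m.+1]])); last first.
  move=> s; case: (all _ _) (H \in s) (uniq s) (all odd s) (size s == m.+1);
  by move=> [] [] [] [].
rewrite big_partitions_min //; apply: eq_big_partitions => // s _.
rewrite rcons_uniq all_rcons size_rcons eqSS odd_H !all_leqSE /=.
case s_odd: (all odd s); first last.
  by case: (all _ s) (H \in s) (H.+1 \in s) (uniq s) => [] [] [] [].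
have -> : H.+1 \notin s by apply/negP => /(allP s_odd); rewrite /= odd_H.
by case: (all _ s) (H \in s) (uniq s) (size s == m) => [] [] [] [].
Qed.

Lemma num_distinct_odd_gf_rec m H : (0 < H)%N ->
  FPS (num_distinct_odd m.+1 H) = FPS (num_distinct_odd m.+1 H.+1)
    + q ^+ H * (odd H)%:R * FPS (num_distinct_odd m H.+2).
Proof.
move=> H_gt0; apply: fpsP => n; rewrite fcoefD -mulrA fcoef_XnM.
rewrite [LHS]/= num_distinct_odd_rec //; congr (_ + _).
by case: (odd H); rewrite ?mul1r ?mul0r; case: leqP.
Qed.

Lemma signed_mu2_gf m H : (0 < H)%N -> FPS (signed_mu2 m H) = gf_mu2 m H.
Proof.
move: m H; apply: (fps_rec_unique (r := fun H => altgeom H * altgeom H.+1)).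
- by move=> H _; rewrite gf_mu2_0; apply: fpsP => n; rewrite /= signed_mu2_0.
- exact: signed_mu2_small.
- exact: gf_mu2_small.
- exact: signed_mu2_gf_rec.
- exact: gf_mu2_rec.
Qed.

Lemma num_distinct_odd_gf m H :
  (0 < H)%N -> FPS (num_distinct_odd m H) = gf_distinct_odd m H.
Proof.
move: m H; apply: (fps_rec_unique (r := fun H => (odd H)%:R)).
- move=> H _; rewrite gf_distinct_odd_0; apply: fpsP => n.
  by rewrite /= num_distinct_odd_0.
- exact: num_distinct_odd_small.
- exact: gf_distinct_odd_small.
- exact: num_distinct_odd_gf_rec.
- by move=> m H _; apply: gf_distinct_odd_rec.
Qed.

Lemma signed_mu2_distinct_odd m n : signed_mu2 m 1 n = num_distinct_odd m 1 n.
Proof.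
have := congr1 (fun f => fcoef f n) (gf_mu2_distinct_odd int m).
by rewrite -signed_mu2_gf // -num_distinct_odd_gf.
Qed.

Lemma sumr_sign_count (T : Type) (l : seq T) (k : T -> nat) :
  Posz (count (fun x => ~~ odd (k x)) l) - Posz (count (fun x => odd (k x)) l)
  = \sum_(x <- l) (-1) ^+ k x.
Proof.
elim: l => [|x l IHl]; first by rewrite big_nil.
rewrite big_cons /= -IHl -signr_odd !PoszD.
by case: (odd (k x)); rewrite /= ?expr0 ?expr1; ring.
Qed.

Theorem corollary1p6 (n : nat) :
  (Posz (count (fun s => ~~ odd (ell s + mu2 s)) (partitions n))
   - Posz (count (fun s => odd (ell s + mu2 s)) (partitions n)))%R
  = Posz (count (fun s => uniq s && all odd s) (partitions n)).
Proof.
rewrite sumr_sign_count -sum1_count -natz natr_sum.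
rewrite (big_fibers mu2 n.+1); last first.
  move=> s; rewrite mem_partitions => s_part _.
  by rewrite ltnS (leq_trans (mu2_size s)) ?size_partition.
rewrite (big_fibers size n.+1); last first.
  by move=> s; rewrite mem_partitions ltnS => /size_partition.
apply: eq_bigr => m _; transitivity (signed_mu2 m 1 n).
  by apply: eq_big_partitions => // s /and3P [_ s_pos _]; rewrite [all _ s]s_pos.
rewrite signed_mu2_distinct_odd.
by apply: eq_big_partitions => // s /and3P [_ s_pos _]; rewrite [all _ s]s_pos /= andbA.
Qed.
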